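(* Let $A$, $B$, $D$ be finitely generated lattices, and assume $D$ has a finite generating set $P$ for which $D$ satisfies Dean's condition (D). If $g\colon A\to D$ and $h\colon B\to D$ are bounded lattice epimorphisms, then their fiber product $C=\{(a,b)\in A\times B : g(a)=h(b)\}$ is a finitely generated sublattice of $A\times B$.
   Context: A lattice homomorphism $g\colon A\to D$ is lower bounded if for every $d\in D$ the set $\{x\in A : g(x)\ge d\}$ is either empty or has a least element; it is upper bounded if for every $d\in D$ the set $\{x\in A : g(x)\le d\}$ is either empty or has a greatest element; it is bounded if it is both lower and upper bounded. A lattice $D$ with finite generating set $P$ satisfies Dean's condition (D) (for $P$) if for all finite subsets $S,T\subseteq D$ with $\bigwedge S\le\bigvee T$ at least one of the following holds: there is $s\in S$ with $s\le\bigvee T$; there is $t\in T$ with $\bigwedge S\le t$; there is $p\in P$ with $\bigwedge S\le p\le\bigvee T$. (In a finitely generated lattice the empty meet is the top and the empty join is the bottom element.) The fiber product of epimorphisms $g\colon A\to D$, $h\colon B\to D$ is the sublattice $\{(a,b)\in A\times B: g(a)=h(b)\}$ of $A\times B$. *)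

From HB Require Import structures.
From Stdlib Require Import List.
From mathcomp Require Import all_boot all_order.
Set Implicit Arguments. Unset Strict Implicit. Unset Printing Implicit Defensive.
Import Order.TTheory.
Local Open Scope order_scope.

Inductive genby (T : Type) (m j : T -> T -> T) (s : seq T) : T -> Prop :=
  | genby_base x : In x s -> genby m j s x
  | genby_meet x y : genby m j s x -> genby m j s y -> genby m j s (m x y)
  | genby_join x y : genby m j s x -> genby m j s y -> genby m j s (j x y).

Definition lattice_generated_by (d : Order.disp_t) (L : latticeType d)
    (P : seq L) : Prop :=
  forall x : L, genby Order.meet Order.join P x.

Definition fg_lattice (d : Order.disp_t) (L : latticeType d) : Prop :=
  exists P : seq L, lattice_generated_by P.

Definition lattice_hom (d1 d2 : Order.disp_t) (A : latticeType d1)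
    (D : latticeType d2) (g : A -> D) : Prop :=
  (forall x y, g (x `&` y) = g x `&` g y) /\
  (forall x y, g (x `|` y) = g x `|` g y).

Definition lattice_epi (d1 d2 : Order.disp_t) (A : latticeType d1)
    (D : latticeType d2) (g : A -> D) : Prop :=
  lattice_hom g /\ (forall y : D, exists x : A, g x = y).

Definition lower_bounded (d1 d2 : Order.disp_t) (A : latticeType d1)
    (D : latticeType d2) (g : A -> D) : Prop :=
  forall dd : D,
    (forall x : A, ~ (dd <= g x)) \/
    (exists x0 : A, dd <= g x0 /\ forall x : A, dd <= g x -> x0 <= x).

Definition upper_bounded (d1 d2 : Order.disp_t) (A : latticeType d1)
    (D : latticeType d2) (g : A -> D) : Prop :=
  forall dd : D,
    (forall x : A, ~ (g x <= dd)) \/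
    (exists x0 : A, g x0 <= dd /\ forall x : A, g x <= dd -> x <= x0).

Definition bounded_hom (d1 d2 : Order.disp_t) (A : latticeType d1)
    (D : latticeType d2) (g : A -> D) : Prop :=
  lower_bounded g /\ upper_bounded g.

(* Dean's condition (D) for the finite set P in the lattice D (which has
   top and bottom, used as empty meet / empty join). *)
Definition dean_condition (d : Order.disp_t) (D : tbLatticeType d)
    (P : seq D) : Prop :=
  forall S T : seq D,
    \meet_(s <- S) s <= \join_(t <- T) t ->
    (exists2 s, In s S & s <= \join_(t <- T) t) \/
    (exists2 t, In t T & \meet_(s <- S) s <= t) \/
    (exists2 p, In p P &
        (\meet_(s <- S) s <= p) && (p <= \join_(t <- T) t)).

Definition fiber_product_fg (d1 d2 d3 : Order.disp_t) (A : latticeType d1)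
    (B : latticeType d2) (D : latticeType d3) (g : A -> D) (h : B -> D) : Prop :=
  exists Q : seq (A * B),
    (forall q, In q Q -> g q.1 = h q.2) /\
    (forall c : A * B,
        g c.1 = h c.2 <->
        genby (fun x y => (x.1 `&` y.1, x.2 `&` y.2))
              (fun x y => (x.1 `|` y.1, x.2 `|` y.2)) Q c).

From HB Require Import structures.
From Stdlib Require Import List ClassicalEpsilon.
From mathcomp Require Import all_boot all_order.
Set Implicit Arguments. Unset Strict Implicit. Unset Printing Implicit Defensive.
Import Order.TTheory.
Local Open Scope order_scope.

(* A bounded epimorphism g : A -> D has a lower adjoint beta_g and an upper
   adjoint alpha_g (beta_g d = least x with d <= g x, alpha_g d = greatest x
   with g x <= d), both sections of g.  Given generators X of A, Y of B and
   P of D, the fiber product C = {(a,b) | g a = h b} is generated by the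
   finitely many pairs
     (alpha_g p, beta_h p), (beta_g p, alpha_h p)      p in P,
     (x, beta_h (g x)),     (x, alpha_h (g x))         x in X,
     (beta_g (h y), y),     (alpha_g (h y), y)         y in Y.
   The heart of the proof shows that (alpha_g d, beta_h d) lies in their span
   for every d in D, by induction on d over P: the meet step is a finite meet
   of generators, exact thanks to Dean's condition (lemma dean_meet_bound);
   the join step is the meet step in the order duals with A and B swapped.
   Then (a, beta_h (g a)) lies in the span by induction on a over X, and
   finally (a, b) = (a, beta_h (g a)) `|` (beta_g (h b), b) for (a, b) in C. *)

Lemma InE (T : eqType) (x : T) (s : seq T) : In x s <-> x \in s.
Proof.
elim: s => [|y s IH] //=; rewrite in_cons; split.
- by case=> [->|/IH ->]; rewrite ?eqxx ?orbT.
- by case/orP=> [/eqP->|/IH]; [left | right].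
Qed.

(* Generation is insensitive to the order of the two operations; this is
   what transports generating sets to the order dual. *)
Lemma genby_swap (T : Type) (m j : T -> T -> T) (s : seq T) (x : T) :
  genby m j s x -> genby j m s x.
Proof.
by elim=> *; [apply: genby_base | apply: genby_join | apply: genby_meet].
Qed.

Section Duality.
Variables (dL dM : Order.disp_t) (L : latticeType dL) (M : latticeType dM).

Lemma generated_dual (X : seq L) :
  lattice_generated_by X -> lattice_generated_by (X : seq L^d).
Proof. by move=> genX x; apply: genby_swap. Qed.

Lemma lattice_hom_dual (f : L -> M) :
  lattice_hom f -> lattice_hom (f : L^d -> M^d).
Proof. by case. Qed.

Lemma lattice_epi_dual (f : L -> M) :
  lattice_epi f -> lattice_epi (f : L^d -> M^d).
Proof. by case=> /lattice_hom_dual. Qed.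

Lemma dean_dual (dD : Order.disp_t) (D : tbLatticeType dD) (P : seq D) :
  dean_condition P -> dean_condition (P : seq D^d).
Proof.
move=> dean S T le_ST; case: (dean T S le_ST) => [[s Hs le_s]|[[t Ht le_t]|[p Hp]]].
- by right; left; exists s.
- by left; exists t.
- by right; right; exists p; rewrite // andbC.
Qed.
End Duality.

(* Galois adjoints of a map f : L -> M, stated as boolean equalities so that
   they can be used for rewriting. *)
Section Adjoints.
Variables (dL dM : Order.disp_t) (L : latticeType dL) (M : latticeType dM).
Variable f : L -> M.

Definition lower_adjoint (b : M -> L) := forall y x, (b y <= x) = (y <= f x).
Definition upper_adjoint (a : M -> L) := forall y x, (x <= a y) = (f x <= y).

Lemma lattice_hom_mono : lattice_hom f -> {homo f : x y / x <= y}.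
Proof. by case=> fI _ x y /meet_idPl <-; rewrite fI leIr. Qed.

Variable b : M -> L.
Hypothesis b_adj : lower_adjoint b.

Lemma lower_adjoint_unit y : y <= f (b y).
Proof. by rewrite -b_adj. Qed.

Lemma lower_adjoint_counit x : b (f x) <= x.
Proof. by rewrite b_adj. Qed.

Lemma lower_adjoint_mono : {homo b : y z / y <= z}.
Proof. by move=> y z le_yz; rewrite b_adj (le_trans le_yz) ?lower_adjoint_unit. Qed.

Lemma lower_adjointU y z : b (y `|` z) = b y `|` b z.
Proof.
apply/le_anti; rewrite leUx !lower_adjoint_mono ?leUl ?leUr // andbT.
by rewrite b_adj leUx -!b_adj leUl leUr.
Qed.
End Adjoints.

(* Upper adjoints are the lower adjoints of the dual map. *)
Section UpperAdjoints.
Variables (dL dM : Order.disp_t) (L : latticeType dL) (M : latticeType dM).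
Variables (f : L -> M) (a : M -> L).
Hypothesis a_adj : upper_adjoint f a.

Lemma upper_adjoint_unit x : x <= a (f x).
Proof. exact: (@lower_adjoint_counit _ _ L^d M^d f a a_adj). Qed.

Lemma upper_adjoint_counit y : f (a y) <= y.
Proof. exact: (@lower_adjoint_unit _ _ L^d M^d f a a_adj). Qed.

Lemma upper_adjointI y z : a (y `&` z) = a y `&` a z.
Proof. exact: (@lower_adjointU _ _ L^d M^d f a a_adj). Qed.
End UpperAdjoints.

Lemma lower_adjoint_exists dL dM (L : latticeType dL) (M : latticeType dM)
    (f : L -> M) :
  lattice_epi f -> lower_bounded f ->
  exists b : M -> L, lower_adjoint f b /\ cancel b f.
Proof.
move=> [fhom fsurj] lb.
have least y : {x0 | y <= f x0 /\ forall x, y <= f x -> x0 <= x}.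
  apply: constructive_indefinite_description.
  case: (lb y) => // none; case: (fsurj y) => x fx_y.
  by case: (none x); rewrite fx_y.
exists (fun y => sval (least y)); split=> [y x | y];
  case: (least y) => x0 [y_fx0 x0_min] /=.
  apply/idP/idP => [/(lattice_hom_mono fhom)|]; [exact: le_trans | exact: x0_min].
apply/le_anti; rewrite y_fx0 andbT; case: (fsurj y) => x fx_y.
by rewrite -fx_y (lattice_hom_mono fhom) // x0_min // fx_y.
Qed.

Lemma upper_adjoint_exists dL dM (L : latticeType dL) (M : latticeType dM)
    (f : L -> M) :
  lattice_epi f -> upper_bounded f ->
  exists a : M -> L, upper_adjoint f a /\ cancel a f.
Proof.
by move=> /lattice_epi_dual fepi ub; apply: (@lower_adjoint_exists _ _ L^d M^d).
Qed.

Section DeanBound.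
Variables (dB dD : Order.disp_t) (B : latticeType dB) (D : tbLatticeType dD).
Variables (P : seq D) (Y : seq B) (h : B -> D) (beta : D -> B).
Hypotheses (genY : lattice_generated_by Y) (dean : dean_condition P).
Hypotheses (hhom : lattice_hom h) (beta_adj : lower_adjoint h beta).

Lemma dean_meet_bound d1 d2 v :
  v <= beta d1 -> v <= beta d2 ->
  (forall p, In p P -> d1 `&` d2 <= p -> v <= beta p) ->
  (forall y, In y Y -> d1 `&` d2 <= h y -> v <= y) ->
  forall b, d1 `&` d2 <= h b -> v <= b.
Proof.
case: hhom => hI hU v_d1 v_d2 v_P v_Y b.
elim: (genY b) => {b} [y /v_Y // | b1 b2 _ IH1 _ IH2 | b1 b2 _ IH1 _ IH2].
  by rewrite hI lexI => /andP[/IH1 v_b1 /IH2 v_b2]; rewrite lexI v_b1 v_b2.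
rewrite hU => le_d_b.
have via_beta e : v <= beta e -> e <= h b1 `|` h b2 -> v <= b1 `|` b2.
  by move=> v_e le_e; apply: le_trans v_e _; rewrite beta_adj hU.
have := dean (S := [:: d1; d2]) (T := [:: h b1; h b2]).
rewrite !big_cons !big_nil meetx1 joinx0 => /(_ le_d_b).
case=> [[s Hs le_s]|[[t Ht le_t]|[p Hp /andP[le_dp le_pb]]]].
- by case: Hs le_s => [<-|[<-|[]]]; apply: via_beta.
- case: Ht le_t => [<-|[<-|[]]] => [/IH1|/IH2] /le_trans; apply.
    exact: leUl.
  exact: leUr.
- exact: via_beta (v_P p Hp le_dp) le_pb.
Qed.
End DeanBound.

Section PairOperations.
Variables (dA dB : Order.disp_t) (A : latticeType dA) (B : latticeType dB).

Definition pair_meet (x y : A * B) := (x.1 `&` y.1, x.2 `&` y.2).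
Definition pair_join (x y : A * B) := (x.1 `|` y.1, x.2 `|` y.2).

Lemma foldr_pair_meet (q0 : A * B) (s : seq (A * B)) :
  foldr pair_meet q0 s =
    (foldr Order.meet q0.1 (map fst s), foldr Order.meet q0.2 (map snd s)).
Proof. by elim: s => [|q s /= ->]; [case: q0|]. Qed.
End PairOperations.
Arguments pair_meet {dA dB A B} x y.
Arguments pair_join {dA dB A B} x y.

Lemma le_foldr_meet dL (L : latticeType dL) (z x : L) (s : seq L) :
  (z <= foldr Order.meet x s) = (z <= x) && all (>= z) s.
Proof. by elim: s => [|y s IH] /=; rewrite ?andbT // lexI IH andbCA. Qed.

Lemma foldr_closed (T : eqType) (op : T -> T -> T) (S : T -> Prop) q0 s :
  (forall x y, S x -> S y -> S (op x y)) ->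
  S q0 -> (forall q, q \in s -> S q) -> S (foldr op q0 s).
Proof.
move=> S_op S_q0; elim: s => //= q s IH S_s.
apply: S_op; first by apply: S_s; rewrite mem_head.
by apply: IH => r r_s; apply: S_s; rewrite in_cons r_s orbT.
Qed.

Section MeetStep.
Variables (dA dB dD : Order.disp_t).
Variables (A : latticeType dA) (B : latticeType dB) (D : tbLatticeType dD).
Variables (P : seq D) (Y : seq B) (g : A -> D) (h : B -> D).
Variables (alpha : D -> A) (beta : D -> B).
Hypotheses (genY : lattice_generated_by Y) (dean : dean_condition P).
Hypothesis hhom : lattice_hom h.
Hypotheses (alpha_adj : upper_adjoint g alpha) (beta_adj : lower_adjoint h beta).
Variable S : A * B -> Prop.
Hypothesis S_meet : forall x y, S x -> S y -> S (pair_meet x y).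
Hypothesis S_P : forall p, In p P -> S (alpha p, beta p).
Hypothesis S_Y : forall y, In y Y -> S (alpha (h y), y).

Lemma fiber_meet_step d1 d2 :
  S (alpha d1, beta d1) -> S (alpha d2, beta d2) ->
  S (alpha (d1 `&` d2), beta (d1 `&` d2)).
Proof.
move=> S_d1 S_d2; set d := d1 `&` d2.
(* the generators lying above (alpha d, beta d) that are needed to cut
   beta d1 `&` beta d2 down to beta d *)
pose L := [seq (alpha p, beta p) | p <- P & d <= p] ++
          [seq (alpha (h y), y) | y <- Y & d <= h y].
have memL q : q \in L ->
    (exists2 p, In p P /\ d <= p & q = (alpha p, beta p)) \/
    (exists2 y, In y Y /\ d <= h y & q = (alpha (h y), y)).
  rewrite mem_cat => /orP[] /mapP[z]; rewrite mem_filter => /andP[le_z /InE z_in] ->.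
    by left; exists z.
  by right; exists z.
have above_L q : q \in L -> (alpha d <= q.1) && (beta d <= q.2).
  have counit_d := upper_adjoint_counit alpha_adj d.
  case/memL=> [[p [_ le_dp] ->]|[y [_ le_dy] ->]] /=; rewrite alpha_adj beta_adj.
    by rewrite (le_trans counit_d le_dp) (le_trans le_dp (lower_adjoint_unit beta_adj p)).
  by rewrite le_dy (le_trans counit_d le_dy).
have S_fold : S (foldr pair_meet (pair_meet (alpha d1, beta d1) (alpha d2, beta d2)) L).
  apply: foldr_closed S_meet (S_meet S_d1 S_d2) _ => q.
  by case/memL=> [[p [p_P _] ->]|[y [y_Y _] ->]]; [apply: S_P | apply: S_Y].
rewrite foldr_pair_meet /= -(upper_adjointI alpha_adj) in S_fold.
set u := foldr _ _ _ in S_fold; set v := foldr _ _ _ in S_fold.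
have /andP[u_d _] : (u <= alpha d) && all (>= u) (map fst L).
  by rewrite -le_foldr_meet.
have /andP[v_d12 /allP v_L] : (v <= beta d1 `&` beta d2) && all (>= v) (map snd L).
  by rewrite -le_foldr_meet.
have -> : alpha d = u.
  apply/le_anti; rewrite u_d andbT /u le_foldr_meet lexx /=.
  by apply/allP=> _ /mapP[q /above_L /andP[? _] ->].
suff -> : beta d = v by [].
apply/le_anti/andP; split.
  rewrite /v le_foldr_meet lexI !(lower_adjoint_mono beta_adj) ?leIl ?leIr //=.
  by apply/allP=> _ /mapP[q /above_L /andP[_ ?] ->].
have in_L q : q \in L -> v <= q.2 by move=> q_L; apply: v_L; apply: map_f.
move: v_d12; rewrite lexI => /andP[v_d1 v_d2].
apply: (dean_meet_bound genY dean hhom beta_adj v_d1 v_d2);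
  last exact: lower_adjoint_unit beta_adj d.
- move=> p p_P le_dp; apply: (in_L (alpha p, beta p)).
  by rewrite mem_cat map_f // mem_filter le_dp; apply/InE.
- move=> y y_Y le_dy; apply: (in_L (alpha (h y), y)).
  by rewrite mem_cat map_f ?orbT // mem_filter le_dy; apply/InE.
Qed.
End MeetStep.

Section FiberSide.
Variables (dA dB dD : Order.disp_t).
Variables (A : latticeType dA) (B : latticeType dB) (D : tbLatticeType dD).
Variables (P : seq D) (X : seq A) (Y : seq B) (g : A -> D) (h : B -> D).
Variables (alpha : D -> A) (beta : D -> B).
Hypotheses (genP : lattice_generated_by P) (genX : lattice_generated_by X).
Hypotheses (genY : lattice_generated_by Y) (dean : dean_condition P).
Hypotheses (ghom : lattice_hom g) (hhom : lattice_hom h).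
Hypotheses (alpha_adj : upper_adjoint g alpha) (beta_adj : lower_adjoint h beta).
Variable S : A * B -> Prop.
Hypothesis S_meet : forall x y, S x -> S y -> S (pair_meet x y).
Hypothesis S_join : forall x y, S x -> S y -> S (pair_join x y).
Hypothesis S_P : forall p, In p P -> S (alpha p, beta p).
Hypothesis S_X : forall x, In x X -> S (x, beta (g x)).
Hypothesis S_Y : forall y, In y Y -> S (alpha (h y), y).

(* The join step is the meet step for the duals of B, A, D, g and h. *)
Lemma fiber_adjoint_pair d : S (alpha d, beta d).
Proof.
elim: (genP d) => {d} [p /S_P // | d1 d2 _ S_d1 _ S_d2 | d1 d2 _ S_d1 _ S_d2].
  exact: (fiber_meet_step genY dean hhom alpha_adj beta_adj S_meet S_P S_Y).
exact: (@fiber_meet_step _ _ _ B^d A^d D^d P X h g beta alpha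
          (generated_dual genX) (dean_dual dean) (lattice_hom_dual ghom)
          beta_adj alpha_adj (fun q => S (q.2, q.1))
          (fun x y Sx Sy => S_join Sx Sy) S_P S_X d1 d2 S_d1 S_d2).
Qed.

Lemma fiber_graph a : S (a, beta (g a)).
Proof.
have beta_gU a1 a2 : beta (g (a1 `|` a2)) = beta (g a1) `|` beta (g a2).
  by case: ghom => _ ->; rewrite (lower_adjointU beta_adj).
have cut q : S q -> beta (g q.1) <= q.2 -> S (q.1, beta (g q.1)).
  move=> Sq le_q; have := S_meet Sq (fiber_adjoint_pair (g q.1)).
  by rewrite /pair_meet meet_l ?(upper_adjoint_unit alpha_adj) // meet_r.
elim: (genX a) => {a} [x /S_X // | a1 a2 _ S_a1 _ S_a2 | a1 a2 _ S_a1 _ S_a2].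
  apply: (cut _ (S_meet S_a1 S_a2)) => /=.
  by rewrite lexI !(lower_adjoint_mono beta_adj) // (lattice_hom_mono ghom) ?leIl ?leIr.
by apply: (cut _ (S_join S_a1 S_a2)); rewrite /= beta_gU.
Qed.
End FiberSide.

Section FiberGenerators.
Variables (dA dB dD : Order.disp_t).
Variables (A : latticeType dA) (B : latticeType dB) (D : tbLatticeType dD).
Variables (P : seq D) (X : seq A) (Y : seq B) (g : A -> D) (h : B -> D).
Variables (alpha_g beta_g : D -> A) (alpha_h beta_h : D -> B).
Hypotheses (genP : lattice_generated_by P) (genX : lattice_generated_by X).
Hypotheses (genY : lattice_generated_by Y) (dean : dean_condition P).
Hypotheses (ghom : lattice_hom g) (hhom : lattice_hom h).
Hypotheses (alpha_g_adj : upper_adjoint g alpha_g) (beta_g_adj : lower_adjoint g beta_g).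
Hypotheses (alpha_h_adj : upper_adjoint h alpha_h) (beta_h_adj : lower_adjoint h beta_h).
Hypotheses (alpha_gK : cancel alpha_g g) (beta_gK : cancel beta_g g).
Hypotheses (alpha_hK : cancel alpha_h h) (beta_hK : cancel beta_h h).

Definition fiber_generators : seq (A * B) :=
  [seq (alpha_g p, beta_h p) | p <- P] ++ [seq (beta_g p, alpha_h p) | p <- P] ++
  [seq (x, beta_h (g x)) | x <- X] ++ [seq (x, alpha_h (g x)) | x <- X] ++
  [seq (beta_g (h y), y) | y <- Y] ++ [seq (alpha_g (h y), y) | y <- Y].

Lemma fiber_generators_in_fiber q : In q fiber_generators -> g q.1 = h q.2.
Proof.
move/InE; rewrite !mem_cat => /orP[|/orP[|/orP[|/orP[|/orP[]]]]] /mapP[z _ ->] /=;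
  by rewrite ?alpha_gK ?beta_gK ?alpha_hK ?beta_hK.
Qed.

Lemma fiber_span_in_fiber c :
  genby pair_meet pair_join fiber_generators c -> g c.1 = h c.2.
Proof.
case: ghom hhom => [gI gU] [hI hU].
elim=> [q /fiber_generators_in_fiber // | x y _ Ex _ Ey | x y _ Ex _ Ey] /=.
  by rewrite gI hI Ex Ey.
by rewrite gU hU Ex Ey.
Qed.

(* Every (a, b) with g a = h b is the join of (a, beta_h (g a)) and
   (beta_g (h b), b), which lie in the span by lemma fiber_graph applied to
   both sides. *)
Lemma fiber_in_span c :
  g c.1 = h c.2 -> genby pair_meet pair_join fiber_generators c.
Proof.
set span := genby pair_meet pair_join fiber_generators.
have span_meet x y : span x -> span y -> span (pair_meet x y) by apply: genby_meet.
have span_join x y : span x -> span y -> span (pair_join x y) by apply: genby_join.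
have gen q : q \in fiber_generators -> span q by move/InE; apply: genby_base.
have graph_A a : span (a, beta_h (g a)).
  apply: (fiber_graph genP genX genY dean ghom hhom alpha_g_adj beta_h_adj
            span_meet span_join) => z /InE z_in;
    by apply: gen; rewrite !mem_cat map_f ?orbT.
have graph_B b : span (beta_g (h b), b).
  apply: (fiber_graph genP genY genX dean hhom ghom alpha_h_adj beta_g_adj
            (S := fun q => span (q.2, q.1))
            (fun x y => span_meet (x.2, x.1) (y.2, y.1))
            (fun x y => span_join (x.2, x.1) (y.2, y.1))) => z /InE z_in;
    by apply: gen; rewrite !mem_cat map_f ?orbT.
case: c => a b /= fib; have := span_join _ _ (graph_A a) (graph_B b).
rewrite /pair_join /= -fib join_l ?(lower_adjoint_counit beta_g_adj) //.
by rewrite fib join_r ?(lower_adjoint_counit beta_h_adj).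
Qed.

Lemma fiber_product_generated : fiber_product_fg g h.
Proof.
exists fiber_generators; split; first exact: fiber_generators_in_fiber.
by move=> c; split; [apply: fiber_in_span | apply: fiber_span_in_fiber].
Qed.
End FiberGenerators.

Theorem mainTheorem1 (dA dB dD : Order.disp_t)
    (A : latticeType dA) (B : latticeType dB) (D : tbLatticeType dD)
    (P : seq D) (g : A -> D) (h : B -> D) :
  fg_lattice A -> fg_lattice B ->
  lattice_generated_by P -> dean_condition P ->
  lattice_epi g -> bounded_hom g ->
  lattice_epi h -> bounded_hom h ->
  fiber_product_fg g h.
Proof.
move=> [X genX] [Y genY] genP dean gepi [glb gub] hepi [hlb hub].
have [beta_g [beta_g_adj beta_gK]] := lower_adjoint_exists gepi glb.
have [alpha_g [alpha_g_adj alpha_gK]] := upper_adjoint_exists gepi gub.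
have [beta_h [beta_h_adj beta_hK]] := lower_adjoint_exists hepi hlb.
have [alpha_h [alpha_h_adj alpha_hK]] := upper_adjoint_exists hepi hub.
exact: (fiber_product_generated genP genX genY dean gepi.1 hepi.1
          alpha_g_adj beta_g_adj alpha_h_adj beta_h_adj
          alpha_gK beta_gK alpha_hK beta_hK).
Qed.
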